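(* Let $G$ be a graph whose $\operatorname{IR}$-graph $H=G(\operatorname{IR})$ is connected, and let $X$ be an $\operatorname{IR}(G)$-set such that either (i) the induced subgraph $G[X]$ has exactly one edge, or (ii) $X$ is independent and at least two vertices of $X$ have $X$-external private neighbours. Then $X$ lies on an induced $4$-cycle of $H$.
   Context: All graphs are finite and simple. For $G=(V,E)$, $D\subseteq V$, $v\in D$: $\operatorname{PN}(v,D)=N[v]-N[D-\{v\}]$ and $\operatorname{EPN}(v,D)=\operatorname{PN}(v,D)-D$; elements of $\operatorname{EPN}(v,D)$ are the $D$-external private neighbours of $v$. $D$ is irredundant if $\operatorname{PN}(v,D)\neq\varnothing$ for all $v\in D$; $\operatorname{IR}(G)$ is the maximum size of an irredundant set; an $\operatorname{IR}(G)$-set is an irredundant set of that size. $G(\operatorname{IR})$ has the $\operatorname{IR}(G)$-sets as vertices, with $D\sim D'$ iff there exist $u\in D$, $v\in D'$ with $uv\in E(G)$ and $D'=(D-\{u\})\cup\{v\}$. *)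

(* A finite simple graph is a symmetric irreflexive
   relation e : rel T on a finite type T. *)
From mathcomp Require Import all_boot.
Set Implicit Arguments. Unset Strict Implicit. Unset Printing Implicit Defensive.

Section IRGraph.
Variables (T : finType) (e : rel T).

Definition cnbhd (v : T) : {set T} := [set u | (u == v) || e v u].
Definition cnbhd_set (S : {set T}) : {set T} := \bigcup_(v in S) cnbhd v.

Definition PN (v : T) (D : {set T}) : {set T} := cnbhd v :\: cnbhd_set (D :\ v).
Definition EPN (v : T) (D : {set T}) : {set T} := PN v D :\: D.

Definition irredundant (D : {set T}) : bool := [forall v in D, PN v D != set0].

Definition IR : nat := \max_(D : {set T} | irredundant D) #|D|.

Definition IRset (D : {set T}) : bool := irredundant D && (#|D| == IR).

Definition IRadj (D D' : {set T}) : bool :=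
  [&& IRset D, IRset D' &
   [exists u in D, exists v in D', e u v && (D' == (D :\ u) :|: [set v])]].

Definition IRgraph_connected : Prop :=
  forall D D', IRset D -> IRset D' -> connect IRadj D D'.

Definition induced_edges (X : {set T}) : {set {set T}} :=
  [set S : {set T} | (S \subset X) &&
     [exists u, exists v, e u v && (S == [set u; v])]].

Definition independent (X : {set T}) : bool :=
  [forall u in X, forall v in X, ~~ e u v].

Definition on_induced_C4 (X : {set T}) : Prop :=
  exists D1 D2 D3 : {set T},
    [/\ uniq [:: X; D1; D2; D3],
        [/\ IRadj X D1, IRadj D1 D2, IRadj D2 D3 & IRadj D3 X] &
        ~~ IRadj X D2 /\ ~~ IRadj D1 D3].

End IRGraph.

From mathcomp Require Import all_boot.
Set Implicit Arguments. Unset Strict Implicit. Unset Printing Implicit Defensive.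

(* Let x, y be distinct vertices of the IR-set X with X-external private
   neighbours x', y', such that every edge of G[X] joins x and y.  Exchanging x
   for x', or y for y', or both, keeps the set irredundant: the other vertices
   of X are isolated among X, x', y' and remain their own private neighbours, a
   remaining x or y is its own private neighbour, and x' has x' (if y stays) or
   x (if y leaves) as private neighbour.  Hence X, X-x+x', X-x-y+x'+y', X-y+y'
   are IR-sets forming a 4-cycle of G(IR); it is induced because opposite sets
   differ in two new vertices while adjacent IR-sets differ in one.  In case
   (i) the ends of the unique edge have external private neighbours by
   irredundance; in case (ii) this is assumed. *)

Section PrivateNeighbours.
Variables (T : finType) (e : rel T).
Hypotheses (e_sym : symmetric e) (e_irr : irreflexive e).

Lemma PNP w (D : {set T}) t :
  reflect (t \in cnbhd e w /\ forall z, z \in D -> z != w -> t \notin cnbhd e z)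
          (t \in PN e w D).
Proof.
rewrite /PN in_setD andbC; apply: (iffP andP) => -[tw tD]; split=> //.
  by move=> z zD zw; apply: contra tD => tz; apply/bigcupP; exists z; rewrite ?in_setD1 ?zw.
by apply/bigcupP => -[z]; rewrite in_setD1 => /andP[zw zD]; apply/negP; apply: tD.
Qed.

Lemma EPNP (X : {set T}) x x' : x \in X -> x' \in EPN e x X ->
  [/\ x' \notin X, e x x' & forall z, z \in X -> z != x -> ~~ e z x'].
Proof.
move=> xX; rewrite in_setD => /andP[x'X /PNP[x'x x'_priv]].
split=> // [|z zX zx]; last by have := x'_priv z zX zx; rewrite inE negb_or => /andP[].
by move: x'x; rewrite inE => /orP[/eqP x'E|//]; rewrite x'E xX in x'X.
Qed.

Lemma EPN_neq0_of_adj (X : {set T}) u v :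
  irredundant e X -> u \in X -> v \in X -> e u v -> EPN e u X != set0.
Proof.
move=> irrX uX vX euv; have /set0Pn[p pPN] := forall_inP irrX u uX.
apply/set0Pn; exists p; rewrite in_setD pPN andbT.
apply: contraL pPN => pX; apply/PNP => -[_ p_priv].
have [pu | pu] := eqVneq p u.
  have vu : v != u by apply: contraTneq euv => ->; rewrite e_irr.
  by have := p_priv v vX vu; rewrite pu inE e_sym euv orbT.
by have := p_priv p pX pu; rewrite inE eqxx.
Qed.

End PrivateNeighbours.

Section Swap.
Variables (T : finType) (e : rel T).
Implicit Types (D : {set T}) (u v a b : T).

Definition swap (D : {set T}) u v := D :\ u :|: [set v].

Lemma card_swap D u v : u \in D -> v \notin D -> #|swap D u v| = #|D|.
Proof.
move=> uD vD; rewrite /swap setUC cardsU1 in_setD1 (negPf vD) andbF.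
by rewrite (cardsD1 u D) uD.
Qed.

Lemma swapK D u v : u \in D -> v \notin D -> swap (swap D u v) v u = D.
Proof.
move=> uD vD; apply/setP => z; rewrite !inE.
have [->|_] := eqVneq z u; first by rewrite orbT.
by have [->|_] := eqVneq z v; rewrite /= ?(negPf vD) ?andbT ?orbF.
Qed.

Lemma swapC D u1 v1 u2 v2 : u1 != v2 -> u2 != v1 ->
  swap (swap D u1 v1) u2 v2 = swap (swap D u2 v2) u1 v1.
Proof.
move=> u1v2 u2v1; apply/setP => z; rewrite !inE.
have [->|_] := eqVneq z v1; first by rewrite (eq_sym v1 u2) u2v1 !orbT.
have [->|_] := eqVneq z v2; first by rewrite (eq_sym v2 u1) u1v2 !orbT.
by rewrite !orbF andbCA.
Qed.

Lemma swap_sub D (A : {set T}) u v : D \subset A -> v \in A -> swap D u v \subset A.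
Proof. by move=> sDA vA; rewrite subUset sub1set vA (subset_trans (subsetDl _ _)). Qed.

Lemma IRset_swap D u v : IRset e D -> u \in D -> v \notin D ->
  irredundant e (swap D u v) -> IRset e (swap D u v).
Proof. by case/andP=> _ cardD uD vD irr; rewrite /IRset irr card_swap. Qed.

Lemma IRadj_swap D D' u v : IRset e D -> IRset e D' -> u \in D -> e u v ->
  D' = swap D u v -> IRadj e D D'.
Proof.
move=> IRD IRD' uD euv D'E; subst D'.
rewrite /IRadj IRD IRD'; apply/exists_inP; exists u => //.
by apply/exists_inP; exists v; rewrite /swap ?euv ?eqxx // !inE eqxx orbT.
Qed.

Lemma IRadj_fresh_eq D D' a b : IRadj e D D' -> a \in D' :\: D -> b \in D' :\: D -> a = b.
Proof.
case/and3P=> _ _ /exists_inP[u uD /exists_inP[v _ /andP[_ /eqP->]]].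
have fresh z : z \in (D :\ u :|: [set v]) :\: D -> z = v.
  by rewrite !inE => /andP[zD /orP[/andP[_ zD']|/eqP//]]; rewrite zD' in zD.
by move=> /fresh-> /fresh->.
Qed.

End Swap.

Section PrivatePair.
Variables (T : finType) (e : rel T).
Hypothesis e_sym : symmetric e.
Variables (X : {set T}) (x y x' y' : T).
Hypotheses (xX : x \in X) (yX : y \in X) (neq_xy : x != y).
Hypotheses (x'_epn : x' \in EPN e x X) (y'_epn : y' \in EPN e y X).
Hypothesis X_edges : forall z t, z \in X -> t \in X -> e z t -> [set z; t] = [set x; y].

Lemma PN_epn_neq0 (D : {set T}) :
  D \subset X :|: [set x'; y'] -> x \notin D -> (y' \in D -> y \notin D) ->
  x' \in D -> PN e x' D != set0.
Proof.
have [x'X ex' x'_priv] := EPNP xX x'_epn; have [_ _ y'_priv] := EPNP yX y'_epn.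
move=> sDU xD y'yD x'D; apply/set0Pn.
have zx z : z \in D -> z != x by move=> zD; apply: contraNneq xD => <-.
have [yD | yD] := boolP (y \in D).
  have y'D : y' \notin D := contraL y'yD yD.
  exists x'; apply/PNP; split=> [|z zD zx']; first by rewrite inE eqxx.
  have zX : z \in X.
    case/setUP: (subsetP sDU z zD) => // /set2P[zE|zE]; first by rewrite zE eqxx in zx'.
    by rewrite -zE zD in y'D.
  by rewrite inE negb_or x'_priv ?zx // andbT; apply: contraNneq x'X => ->.
exists x; apply/PNP; split=> [|z zD zx']; first by rewrite inE e_sym ex' orbT.
rewrite inE negb_or eq_sym zx //=.
case/setUP: (subsetP sDU z zD) => [zX|/set2P[zE|->]]; last by rewrite e_sym y'_priv.
  apply/negP => /(X_edges zX xX) zxE.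
  have : y \in [set z; x] by rewrite zxE !inE eqxx orbT.
  by rewrite !inE (eq_sym y x) (negPf neq_xy) orbF => /eqP yz; rewrite yz zD in yD.
by rewrite zE eqxx in zx'.
Qed.

Lemma mem_PN_kept (D : {set T}) w :
  D \subset X :|: [set x'; y'] -> (x' \in D -> x \notin D) -> (y' \in D -> y \notin D) ->
  ~~ ((x \in D) && (y \in D)) -> w \in D -> w \in X -> w \in PN e w D.
Proof.
have [_ _ x'_priv] := EPNP xX x'_epn; have [_ _ y'_priv] := EPNP yX y'_epn.
move=> sDU x'xD y'yD nxyD wD wX; apply/PNP; split=> [|z zD zw]; first by rewrite inE eqxx.
rewrite inE negb_or eq_sym zw /=.
case/setUP: (subsetP sDU z zD) => [zX|/set2P[zE|zE]]; rewrite ?zE in zD *.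
- apply/negP => /(X_edges zX wX) zwE; case/negP: nxyD.
  have sxyD : [set x; y] \subset D by rewrite -zwE subUset !sub1set zD wD.
  by rewrite !(subsetP sxyD) // !inE eqxx ?orbT.
- have wx : w != x by apply: contraTneq wD => ->; apply: x'xD.
  by rewrite e_sym x'_priv.
- have wy : w != y by apply: contraTneq wD => ->; apply: y'yD.
  by rewrite e_sym y'_priv.
Qed.

End PrivatePair.

Section FourCycle.
Variables (T : finType) (e : rel T).
Hypothesis e_sym : symmetric e.
Variables (X : {set T}) (x y x' y' : T).
Hypotheses (IRset_X : IRset e X) (xX : x \in X) (yX : y \in X) (neq_xy : x != y).
Hypotheses (x'_epn : x' \in EPN e x X) (y'_epn : y' \in EPN e y X).
Hypothesis X_edges : forall z t, z \in X -> t \in X -> e z t -> [set z; t] = [set x; y].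

Lemma irredundant_exchange (D : {set T}) :
  D \subset X :|: [set x'; y'] -> (x' \in D -> x \notin D) -> (y' \in D -> y \notin D) ->
  ~~ ((x \in D) && (y \in D)) -> irredundant e D.
Proof.
move=> sDU x'xD y'yD nxyD; apply/forall_inP => w wD.
case/setUP: (subsetP sDU w wD) => [wX|/set2P[wE|wE]]; rewrite ?wE in wD *.
- by apply/set0Pn; exists w; apply: (mem_PN_kept e_sym xX yX x'_epn y'_epn X_edges sDU).
- exact: (PN_epn_neq0 e_sym xX yX neq_xy x'_epn y'_epn X_edges sDU (x'xD wD) y'yD wD).
- have neq_yx : y != x by rewrite eq_sym.
  have X_edges' z t : z \in X -> t \in X -> e z t -> [set z; t] = [set y; x].
    by move=> zX tX /(X_edges zX tX)->; rewrite setUC.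
  have sDU' : D \subset X :|: [set y'; x'] by rewrite (setUC [set y']).
  exact: (PN_epn_neq0 e_sym yX xX neq_yx y'_epn x'_epn X_edges' sDU' (y'yD wD) x'xD wD).
Qed.

Let x'X : x' \notin X. Proof. by case: (EPNP xX x'_epn). Qed.
Let y'X : y' \notin X. Proof. by case: (EPNP yX y'_epn). Qed.

Let neq_x'y' : x' != y'.
Proof.
have [_ ex' _] := EPNP xX x'_epn; have [_ _ y'_priv] := EPNP yX y'_epn.
by apply: contraTneq ex' => ->; apply: y'_priv.
Qed.

Let neq_notin z t : z \in X -> t \notin X -> ((z == t) = false) * ((t == z) = false).
Proof. by move=> zX tX; rewrite eq_sym; split; apply: contraNF tX => /eqP->. Qed.

Let memE := (xX, yX, negPf x'X, negPf y'X, eqxx, negPf neq_xy, negPf neq_x'y',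
  eq_sym y x, eq_sym y' x',
  neq_notin xX x'X, neq_notin xX y'X, neq_notin yX x'X, neq_notin yX y'X).

Let D1 := swap X x x'.
Let D2 := swap D1 y y'.
Let D3 := swap X y y'.

Let mem_D1 : [/\ x \notin D1, y \in D1, x' \in D1 & y' \notin D1].
Proof. by rewrite !inE ?memE. Qed.

Let mem_D2 : [/\ x \notin D2, y \notin D2, x' \in D2 & y' \in D2].
Proof. by rewrite !inE ?memE. Qed.

Let mem_D3 : [/\ x \in D3, y \notin D3, x' \notin D3 & y' \in D3].
Proof. by rewrite !inE ?memE. Qed.

Let sub_XU : X \subset X :|: [set x'; y']. Proof. exact: subsetUl. Qed.
Let x'U : x' \in X :|: [set x'; y']. Proof. by rewrite !inE eqxx orbT. Qed.
Let y'U : y' \in X :|: [set x'; y']. Proof. by rewrite !inE eqxx !orbT. Qed.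

Let IRset_D1 : IRset e D1.
Proof.
have [xD1 _ _ y'D1] := mem_D1.
apply: IRset_swap => //; apply: irredundant_exchange (swap_sub _ sub_XU x'U) _ _ _;
  by rewrite -/D1 ?(negPf xD1) ?(negPf y'D1).
Qed.

Let IRset_D2 : IRset e D2.
Proof.
have [xD2 yD2 _ _] := mem_D2; have [_ yD1 _ y'D1] := mem_D1.
apply: IRset_swap yD1 y'D1 _ => //.
apply: irredundant_exchange (swap_sub _ (swap_sub _ sub_XU x'U) y'U) _ _ _;
  by rewrite -/D1 -/D2 ?(negPf xD2) ?(negPf yD2).
Qed.

Let IRset_D3 : IRset e D3.
Proof.
have [_ yD3 x'D3 _] := mem_D3.
apply: IRset_swap => //; apply: irredundant_exchange (swap_sub _ sub_XU y'U) _ _ _;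
  by rewrite -/D3 ?(negPf yD3) ?(negPf x'D3) ?andbF.
Qed.

Lemma on_induced_C4_of_private_pair : on_induced_C4 e X.
Proof.
have [xD1 yD1 x'D1 y'D1] := mem_D1; have [xD2 _ x'D2 y'D2] := mem_D2.
have [xD3 _ x'D3 y'D3] := mem_D3.
have [_ ex' _] := EPNP xX x'_epn; have [_ ey' _] := EPNP yX y'_epn.
have set_neq (A B : {set T}) z : z \notin A -> z \in B -> A != B.
  by move=> zA zB; apply: contraNneq zA => ->.
exists D1, D2, D3; split.
- by rewrite /= !inE !negb_or !andbT (set_neq X D1 x') ?(set_neq X D2 x') ?(set_neq X D3 y')
    ?(set_neq D1 D2 y') ?(set_neq D1 D3 y') ?(set_neq D2 D3 x).
- split.
  + exact: IRadj_swap IRset_X IRset_D1 xX ex' _.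
  + exact: IRadj_swap IRset_D1 IRset_D2 yD1 ey' _.
  + apply: (IRadj_swap (v := x) IRset_D2 IRset_D3 x'D2); first by rewrite e_sym.
    by rewrite /D2 /D1 /D3 swapC ?memE // swapK.
  + apply: (IRadj_swap (v := y) IRset_D3 IRset_X y'D3); first by rewrite e_sym.
    by rewrite swapK.
- split; apply/negP => /IRadj_fresh_eq fresh.
  + by move: neq_x'y'; rewrite (fresh x' y') ?eqxx // inE ?x'D2 ?y'D2 ?x'X ?y'X.
  + by move: (neq_notin xX y'X).1; rewrite (fresh x y') ?eqxx // inE ?xD3 ?y'D3 ?xD1 ?y'D1.
Qed.

End FourCycle.

Lemma induced_edges_card1 (T : finType) (e : rel T) (X : {set T}) :
  #|induced_edges e X| = 1 ->
  exists u v, [/\ u \in X, v \in X, e u v &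
    forall z t, z \in X -> t \in X -> e z t -> [set z; t] = [set u; v]].
Proof.
move/eqP/cards1P=> [S ES].
have : S \in induced_edges e X by rewrite ES set11.
rewrite inE => /andP[SX /existsP[u /existsP[v /andP[euv /eqP SE]]]].
have [uX vX] : u \in X /\ v \in X by rewrite !(subsetP SX) // SE !inE eqxx ?orbT.
exists u, v; split=> // z t zX tX ezt; apply/set1P; rewrite -SE -ES inE.
rewrite subUset !sub1set zX tX /=.
by apply/existsP; exists z; apply/existsP; exists t; rewrite ezt eqxx.
Qed.

Unset Implicit Arguments.
Theorem corollary4p3 (T : finType) (e : rel T)
  (e_sym : symmetric e) (e_irr : irreflexive e) (X : {set T}) :
  IRgraph_connected e ->
  IRset e X ->
  (#|induced_edges e X| = 1 \/
   (independent e X /\ 2 <= #|[set v in X | EPN e v X != set0]|)) ->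
  on_induced_C4 e X.
Proof.
move=> _ IRset_X [one_edge | [indepX two_epn]].
  have [x [y [xX yX exy X_edges]]] := induced_edges_card1 one_edge.
  have irrX : irredundant e X := proj1 (andP IRset_X).
  have /set0Pn[x' x'_epn] := EPN_neq0_of_adj e_sym e_irr irrX xX yX exy.
  have eyx : e y x by rewrite e_sym.
  have /set0Pn[y' y'_epn] := EPN_neq0_of_adj e_sym e_irr irrX yX xX eyx.
  have neq_xy : x != y by apply: contraTneq exy => ->; rewrite e_irr.
  exact: (on_induced_C4_of_private_pair e_sym IRset_X xX yX neq_xy x'_epn y'_epn X_edges).
have [x [y [xP yP neq_xy]]] := card_gt1P two_epn.
rewrite !inE in xP yP.
case/andP: xP => xX /set0Pn[x' x'_epn]; case/andP: yP => yX /set0Pn[y' y'_epn].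
apply: (on_induced_C4_of_private_pair e_sym IRset_X xX yX neq_xy x'_epn y'_epn).
by move=> z t zX tX; move/forall_inP/(_ z zX)/forall_inP/(_ t tX): indepX => /negPf->.
Qed.
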